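(* Assume $\|\hat F'(y)-\hat F'(x)\|_F\le L_{\hat F}\|y-x\|$ for all $x,y\in\mathcal F$. Let $x\in\mathcal F$, $\tau>0$, $L\ge L_{\hat F}$, and suppose $T_{L,\tau}(x)\in\mathcal F$. Then $$\frac\tau2+\frac{\hat f_2(x)}{2\tau}-\hat f_1(T_{L,\tau}(x))\ge\frac L2\|T_{L,\tau}(x)-x\|^2.$$
   Context: Let $F:\mathbb R^n\to\mathbb R^m$ be smooth, $\hat F=\frac1{\sqrt m}F$ with Jacobian $\hat F'(x)$; Euclidean norms, $\|\cdot\|_F$ Frobenius norm; $\mathcal F\subseteq\mathbb R^n$ closed convex with nonempty interior. $\hat f_1(x)=\|\hat F(x)\|$, $\hat f_2=\hat f_1^2$, $\psi_{x,L,\tau}(y)=\frac\tau2+\frac1{2\tau}\|\hat F(x)+\hat F'(x)(y-x)\|^2+\frac L2\|y-x\|^2$, and $T_{L,\tau}(x)=\arg\min_{y\in\mathbb R^n}\psi_{x,L,\tau}(y)$. *)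

From HB Require Import structures.
From mathcomp Require Import all_boot all_order all_algebra.
From mathcomp Require Import all_classical all_reals all_analysis.
Set Implicit Arguments. Unset Strict Implicit. Unset Printing Implicit Defensive.
Import Order.TTheory GRing.Theory Num.Theory.
Import numFieldNormedType.Exports.
Local Open Scope classical_set_scope.
Local Open Scope ring_scope.

Definition enorm (R : realType) (n : nat) (v : 'rV[R]_n) : R :=
  Num.sqrt (\sum_(i < n) v ord0 i ^+ 2).

Definition frob (R : realType) (p q : nat) (A : 'M[R]_(p, q)) : R :=
  Num.sqrt (\sum_(i < p) \sum_(j < q) A i j ^+ 2).

Definition Fhat (R : realType) (n m : nat) (F : 'rV[R]_n -> 'rV[R]_m)
  (x : 'rV[R]_n) : 'rV[R]_m := (Num.sqrt (m%:R : R))^-1 *: F x.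

(* Jacobian of G at x, as the matrix of the differential 'd G x acting on
   row vectors: 'd G x v = v *m jac G x. *)
Definition jac (R : realType) (n m : nat) (G : 'rV[R]_n -> 'rV[R]_m)
  (x : 'rV[R]_n) : 'M[R]_(n, m) := lin1_mx ('d G x).

Definition f1hat (R : realType) (n m : nat) (F : 'rV[R]_n -> 'rV[R]_m)
  (x : 'rV[R]_n) : R := enorm (Fhat F x).

Definition f2hat (R : realType) (n m : nat) (F : 'rV[R]_n -> 'rV[R]_m)
  (x : 'rV[R]_n) : R := f1hat F x ^+ 2.

Definition psi (R : realType) (n m : nat) (F : 'rV[R]_n -> 'rV[R]_m)
  (x : 'rV[R]_n) (L tau : R) (y : 'rV[R]_n) : R :=
  tau / 2 + (2 * tau)^-1 * enorm (Fhat F x + (y - x) *m jac (Fhat F) x) ^+ 2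
  + L / 2 * enorm (y - x) ^+ 2.

(* y = T_{L,tau}(x), i.e. y is the (unique) minimizer of psi_{x,L,tau} over R^n *)
Definition is_T (R : realType) (n m : nat) (F : 'rV[R]_n -> 'rV[R]_m)
  (L tau : R) (x y : 'rV[R]_n) : Prop :=
  forall z : 'rV[R]_n, psi F x L tau y <= psi F x L tau z.

From HB Require Import structures.
From mathcomp Require Import all_boot all_order all_algebra.
From mathcomp Require Import all_classical all_reals all_analysis.
From mathcomp Require Import ring lra.
Import Order.TTheory GRing.Theory Num.Theory.
Import numFieldNormedType.Exports.
Local Open Scope classical_set_scope.
Local Open Scope ring_scope.
Set Implicit Arguments. Unset Strict Implicit. Unset Printing Implicit Defensive.

(* Write w := T x - x, l := Fhat x + w J for the linearisation of Fhat at x and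
   r := Fhat (T x) - l for the remainder.  Since the Jacobian is L_F-Lipschitz on
   the segment [x, T x], the mean value theorem applied to t |-> <r, Fhat (x + t w)>
   minus a quadratic gives |r| <= L_F/2 |w|^2.  Hence, by AM-GM,
     f1 (T x) <= |l| + L/2 |w|^2 <= tau/2 + |l|^2/(2 tau) + L/2 |w|^2 = psi (T x).
   On the line through x and T x, psi is a quadratic of curvature at least L/2 |w|^2
   minimised at T x, so psi (T x) + L/2 |w|^2 <= psi x = tau/2 + f2 x/(2 tau). *)

Section Quadratic.
Variable R : realFieldType.

Lemma quadratic_ge0_discr (a b c : R) : 0 <= a ->
  (forall s, 0 <= a * s ^+ 2 - 2 * b * s + c) -> b ^+ 2 <= a * c.
Proof.
move=> a_ge0; have [->|a_neq0] := eqVneq a 0 => q_ge0.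
  have [->|b_neq0] := eqVneq b 0; first by rewrite expr0n mul0r.
  have := q_ge0 ((c + 1) / (2 * b)).
  rewrite mul0r [_ * (_ / _)]mulrC divfK ?mulf_neq0 ?pnatr_eq0 //; lra.
have a_gt0 : 0 < a by rewrite lt_def a_neq0.
rewrite -subr_ge0.
have -> : a * c - b ^+ 2 = a * (a * (b / a) ^+ 2 - 2 * b * (b / a) + c).
  by field; rewrite gt_eqF.
by rewrite mulr_ge0.
Qed.

Lemma quadratic_stationary (d g : R) :
  (forall e, 0 <= d * e + g * e ^+ 2) -> d = 0.
Proof.
move=> q_ge0; set s := (`|g| + 1)^-1.
have s_gt0 : 0 < s by rewrite invr_gt0 ltr_wpDl.
have gs_lt1 : g * s < 1.
  rewrite -(mulfV (lt0r_neq0 (ltr_wpDl (normr_ge0 g) ltr01))) ltr_pM2r //.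
  by rewrite (le_lt_trans (ler_norm g)) // ltrDl.
have := q_ge0 (- d * s).
have -> : d * (- d * s) + g * (- d * s) ^+ 2 = d ^+ 2 * s * (g * s - 1) by ring.
rewrite nmulr_lge0 ?subr_lt0 // pmulr_lle0 // => d2_le0.
by apply/eqP; rewrite -sqrf_eq0 eq_le d2_le0 sqr_ge0.
Qed.

Lemma amgm_le (t z : R) : 0 < t -> z <= t / 2 + (2 * t)^-1 * z ^+ 2.
Proof.
move=> t_gt0; rewrite -subr_ge0.
have -> : t / 2 + (2 * t)^-1 * z ^+ 2 - z = (2 * t)^-1 * (t - z) ^+ 2.
  by field; rewrite gt_eqF.
by rewrite mulr_ge0 ?sqr_ge0 // invr_ge0 mulr_ge0 // ltW.
Qed.

End Quadratic.

Section EuclideanNorm.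
Variable R : realType.
Implicit Types (n : nat) (a : R).

Definition dot n (u v : 'rV[R]_n) : R := \sum_(i < n) u ord0 i * v ord0 i.

Lemma dotC n (u v : 'rV[R]_n) : dot u v = dot v u.
Proof. by apply: eq_bigr => i _; rewrite mulrC. Qed.

Lemma dotDr n (u v w : 'rV[R]_n) : dot u (v + w) = dot u v + dot u w.
Proof. by rewrite /dot -big_split; apply: eq_bigr => i _; rewrite mxE mulrDr. Qed.

Lemma dotZr n a (u v : 'rV[R]_n) : dot u (a *: v) = a * dot u v.
Proof. by rewrite /dot mulr_sumr; apply: eq_bigr => i _; rewrite mxE mulrCA. Qed.

Lemma dotBr n (u v w : 'rV[R]_n) : dot u (v - w) = dot u v - dot u w.
Proof. by rewrite dotDr -scaleN1r dotZr mulN1r. Qed.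

Lemma dotDl n (u v w : 'rV[R]_n) : dot (u + v) w = dot u w + dot v w.
Proof. by rewrite dotC dotDr !(dotC w). Qed.

Lemma dotZl n a (u v : 'rV[R]_n) : dot (a *: u) v = a * dot u v.
Proof. by rewrite dotC dotZr dotC. Qed.

Lemma dotBl n (u v w : 'rV[R]_n) : dot (u - v) w = dot u w - dot v w.
Proof. by rewrite dotC dotBr !(dotC w). Qed.

Lemma dotvv_ge0 n (u : 'rV[R]_n) : 0 <= dot u u.
Proof. by apply: sumr_ge0 => i _; rewrite -expr2 sqr_ge0. Qed.

Lemma enorm_ge0 n (u : 'rV[R]_n) : 0 <= enorm u.
Proof. exact: sqrtr_ge0. Qed.

Lemma enorm_sqr n (u : 'rV[R]_n) : enorm u ^+ 2 = dot u u.
Proof.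
rewrite /enorm sqr_sqrtr; last by apply: sumr_ge0 => i _; rewrite sqr_ge0.
by apply: eq_bigr => i _; rewrite expr2.
Qed.

Lemma enorm0 n : enorm (0 : 'rV[R]_n) = 0.
Proof. by rewrite /enorm big1 ?sqrtr0 // => i _; rewrite mxE expr0n. Qed.

Lemma dot_sqr_le n (u v : 'rV[R]_n) : dot u v ^+ 2 <= dot u u * dot v v.
Proof.
apply: quadratic_ge0_discr (dotvv_ge0 u) _ => s.
have := dotvv_ge0 (s *: u - v).
by rewrite dotBl !dotBr !dotZl !dotZr (dotC v u) expr2 mulrA (mulrC s) -mulrA; lra.
Qed.

Lemma dot_le_enorm n (u v : 'rV[R]_n) : dot u v <= enorm u * enorm v.
Proof.
rewrite (le_trans (ler_norm _)) // -(@ler_pXn2r _ 2) ?nnegrE ?mulr_ge0 ?enorm_ge0 //.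
by rewrite real_normK ?num_real // exprMn !enorm_sqr dot_sqr_le.
Qed.

Lemma enormZ n a (u : 'rV[R]_n) : enorm (a *: u) = `|a| * enorm u.
Proof.
apply/eqP; rewrite -(@eqrXn2 _ 2) ?nnegrE ?mulr_ge0 ?enorm_ge0 //.
by rewrite exprMn real_normK ?num_real // !enorm_sqr dotZl dotZr mulrA expr2.
Qed.

Lemma enormD n (u v : 'rV[R]_n) : enorm (u + v) <= enorm u + enorm v.
Proof.
rewrite -(@ler_pXn2r _ 2) ?nnegrE ?addr_ge0 ?enorm_ge0 //.
rewrite enorm_sqr dotDl !dotDr sqrrD !enorm_sqr (dotC v u).
by have := dot_le_enorm u v; lra.
Qed.

Lemma enorm_mulmx_le n k (u : 'rV[R]_n) (M : 'M[R]_(n, k)) :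
  enorm (u *m M) <= enorm u * frob M.
Proof.
have frobE : frob M ^+ 2 = \sum_(j < k) dot (col j M)^T (col j M)^T.
  rewrite sqr_sqrtr; last by do 2 (apply: sumr_ge0 => ? _); rewrite sqr_ge0.
  rewrite exchange_big; apply: eq_bigr => j _; apply: eq_bigr => i _.
  by rewrite !mxE expr2.
rewrite -(@ler_pXn2r _ 2) ?nnegrE ?mulr_ge0 ?enorm_ge0 ?sqrtr_ge0 //.
rewrite exprMn frobE !enorm_sqr mulr_sumr /dot; apply: ler_sum => j _.
have := dot_sqr_le u (col j M)^T; rewrite /dot.
by rewrite !mxE expr2; under eq_bigr do rewrite !mxE.
Qed.

Lemma dot_mulmx_le n k (r : 'rV[R]_k) (u : 'rV[R]_n) (M : 'M[R]_(n, k)) :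
  dot r (u *m M) <= enorm r * enorm u * frob M.
Proof.
apply: le_trans (dot_le_enorm _ _) _.
by rewrite -mulrA ler_wpM2l ?enorm_ge0 ?enorm_mulmx_le.
Qed.

End EuclideanNorm.

Section TaylorRemainder.
Variables (R : realType) (n m : nat).

Lemma is_derive_quadratic (b g t : R) :
  is_derive t 1 (fun s : R => b * s + g * s ^+ 2) (b + 2 * g * t).
Proof. by apply: is_derive_eq; rewrite /GRing.scale /= !mulr1; ring. Qed.

Lemma is_derive_dot_jac (G : 'rV[R]_n -> 'rV[R]_m) (r : 'rV[R]_m) p w :
  differentiable G p ->
  is_derive p w (fun q => dot r (G q)) (dot r (w *m jac G p)).
Proof.
move=> dG; have dGw : derivable G p w by exact: diff_derivable.
have dGi i : is_derive p w (fun q => G q ord0 i) ((w *m jac G p) ord0 i).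
  apply: DeriveDef; first by move/derivable_mxP: dGw; apply.
  have := derive_mx dGw; rewrite deriveE // /jac mul_rV_lin1 => ->.
  by rewrite mxE.
have -> : (fun q => dot r (G q)) = \sum_(i < m) (r ord0 i \*: (fun q => G q ord0 i)).
  by apply: funext => q; rewrite fct_sumE /dot; apply: eq_bigr.
exact: is_derive_sum.
Qed.

Lemma is_derive_along_line (S : 'rV[R]_n -> R) x w s (D : R) :
  is_derive (x + s *: w) w S D ->
  is_derive s 1 (fun t => S (x + t *: w)) D.
Proof.
case=> dS <-.
have quotE : (fun h : R => h^-1 *: (S (x + (h *: 1 + s) *: w) - S (x + s *: w)))
  = (fun h : R => h^-1 *: (S (h *: w + (x + s *: w)) - S (x + s *: w))).
  by apply: funext => h; rewrite -[h *: 1]/(h * 1) mulr1 scalerDl addrCA addrA.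
by apply: DeriveDef; rewrite ?/derivable ?/derive /= quotE.
Qed.

Lemma convex_segment (dom : set 'rV[R]_n) x y (c : R) :
  convex_set (dom : set (convex_lmodType 'rV[R]_n)) -> dom x -> dom y ->
  0 <= c -> c <= 1 -> dom (x + c *: (y - x)).
Proof.
move=> cvx dx dy c_ge0 c_le1.
have := cvx y x (Itv01 c_ge0 c_le1) (mem_set dy) (mem_set dx).
rewrite inE /=; congr dom.
change (c *: y + (1 - c) *: x = x + c *: (y - x)).
by rewrite scalerBr scalerBl scale1r addrCA addrC.
Qed.

Lemma taylor_remainder_le (G : 'rV[R]_n -> 'rV[R]_m) (dom : set 'rV[R]_n) LG x y :
  (forall z, differentiable G z) ->
  convex_set (dom : set (convex_lmodType 'rV[R]_n)) ->
  (forall p q, dom p -> dom q -> frob (jac G q - jac G p) <= LG * enorm (q - p)) ->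
  dom x -> dom y ->
  enorm (G y - G x - (y - x) *m jac G x) <= LG / 2 * enorm (y - x) ^+ 2.
Proof.
move=> dG cvx Lip dx dy.
set r := G y - G x - _; set w := y - x.
have LGw_ge0 : 0 <= LG * enorm w := le_trans (sqrtr_ge0 _) (Lip _ _ dx dy).
suff : enorm r ^+ 2 <= enorm r * (LG / 2 * enorm w ^+ 2).
  have := enorm_ge0 r; have := mulr_ge0 LGw_ge0 (enorm_ge0 w).
  move: (enorm r) (enorm w) => e v; rewrite !expr2; nra.
set b := dot r (w *m jac G x); set K := enorm r * LG * enorm w ^+ 2.
pose g t := dot r (G (x + t *: w)) - (b * t + K / 2 * t ^+ 2).
pose dg t := dot r (w *m jac G (x + t *: w)) - (b + 2 * (K / 2) * t).
have g_derive (t : R) : is_derive t 1 g (dg t).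
  apply: is_deriveB; last exact: is_derive_quadratic.
  exact: is_derive_along_line (is_derive_dot_jac _ _ (dG _)).
have g_cont : {within `[0, 1], continuous g}.
  by apply: derivable_within_continuous => t _; case: (g_derive t).
have [c] := MVT ltr01 (fun t _ => g_derive t) g_cont.
rewrite in_itv /= => /andP[c_gt0 c_lt1] g_mvt.
have dg_le0 : dg c <= 0.
  have dxc := convex_segment cvx dx dy (ltW c_gt0) (ltW c_lt1); rewrite -/w in dxc.
  have := Lip _ _ dx dxc.
  rewrite [_ + _ - x]addrC addKr enormZ (ger0_norm (ltW c_gt0)) => Lip_c.
  rewrite /dg subr_le0 -subr_le0 opprD addrA -dotBr -mulmxBr subr_le0.
  apply: le_trans (dot_mulmx_le _ _ _) _.
  apply: le_trans (ler_wpM2l (mulr_ge0 (enorm_ge0 r) (enorm_ge0 w)) Lip_c) _.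
  suff -> : 2 * (K / 2) * c = enorm r * enorm w * (LG * (c * enorm w)) by [].
  by rewrite /K; field.
have yE : x + w = y by rewrite addrC subrK.
move: g_mvt; rewrite /g !scale1r !scale0r addr0 yE expr1n expr0n /= !mulr0 !mulr1.
rewrite enorm_sqr {1}/r !dotBr -/b /K; lra.
Qed.

End TaylorRemainder.

Section ProximalStep.
Variables (R : realType) (n m : nat) (F : 'rV[R]_n -> 'rV[R]_m).
Variables (x : 'rV[R]_n) (L tau : R).
Local Notation psi := (psi F x L tau).
Local Notation J := (jac (Fhat F) x).

Lemma psi_center : psi x = tau / 2 + f2hat F x / (2 * tau).
Proof.
rewrite /psi /f2hat /f1hat subrr mul0mx addr0 enorm0 expr0n mulr0 addr0.
by rewrite [_^-1 * _]mulrC.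
Qed.

Lemma psi_along_line w s : psi (x + s *: w) = psi x
  + s * ((2 * tau)^-1 * (2 * dot (Fhat F x) (w *m J)))
  + s ^+ 2 * ((2 * tau)^-1 * dot (w *m J) (w *m J) + L / 2 * dot w w).
Proof.
rewrite /psi (addrC x) addrK subrr mul0mx addr0 enorm0 -scalemxAl !enorm_sqr.
move: (Fhat F x) => a; rewrite !dotDl !dotDr !dotZl !dotZr (dotC (w *m J)).
rewrite expr2; ring.
Qed.

Lemma psi_argmin_le (y : 'rV[R]_n) : 0 <= tau -> is_T F L tau x y ->
  psi y + L / 2 * enorm (y - x) ^+ 2 <= psi x.
Proof.
move=> tau_ge0 y_min; set w := y - x; have line := psi_along_line w.
set b := _^-1 * (2 * _) in line; set g := _ + L / 2 * _ in line.
have yE : x + 1 *: w = y by rewrite scale1r addrC subrK.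
have stationary : b + 2 * g = 0.
  apply: (@quadratic_stationary _ _ g) => e.
  have := y_min (x + (1 + e) *: w); rewrite -{1}yE !line; nra.
have Lw_le_g : L / 2 * dot w w <= g.
  by rewrite lerDr mulr_ge0 ?dotvv_ge0 // invr_ge0 mulr_ge0.
have := line 1; rewrite yE => ->; rewrite enorm_sqr; lra.
Qed.

Lemma f1hat_le_psi (y : 'rV[R]_n) : 0 < tau ->
  enorm (Fhat F y - Fhat F x - (y - x) *m J) <= L / 2 * enorm (y - x) ^+ 2 ->
  f1hat F y <= psi y.
Proof.
move=> tau_gt0; set lin := Fhat F x + (y - x) *m J.
have -> : Fhat F y - Fhat F x - (y - x) *m J = Fhat F y - lin by rewrite opprD addrA.
move=> rem_le; rewrite /f1hat /psi -/lin -[Fhat F y](subrK lin) addrC.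
apply: le_trans (enormD _ _) _.
by have := amgm_le (enorm lin) tau_gt0; lra.
Qed.

End ProximalStep.

Unset Implicit Arguments.

Theorem lemma2 (R : realType) (n m : nat) (F : 'rV[R]_n -> 'rV[R]_m)
  (dom : set 'rV[R]_n) (LF : R) :
  (forall x : 'rV[R]_n, differentiable F x) ->
  closed dom -> convex_set (dom : set (convex_lmodType 'rV[R]_n)) ->
  dom° !=set0 ->
  (forall x y, dom x -> dom y ->
     frob (jac (Fhat F) y - jac (Fhat F) x) <= LF * enorm (y - x)) ->
  forall (x : 'rV[R]_n) (tau L : R) (Tx : 'rV[R]_n),
  dom x -> 0 < tau -> LF <= L ->
  is_T F L tau x Tx -> dom Tx ->
  tau / 2 + f2hat F x / (2 * tau) - f1hat F Tx >= L / 2 * enorm (Tx - x) ^+ 2.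
Proof.
move=> dF _ cvx _ Lip x tau L Tx dx tau_gt0 LF_le_L Tx_min dTx.
have dFhat z : differentiable (Fhat F) z by exact: differentiableZ.
have rem_le := taylor_remainder_le dFhat cvx Lip dx dTx.
have remL_le : enorm (Fhat F Tx - Fhat F x - (Tx - x) *m jac (Fhat F) x)
    <= L / 2 * enorm (Tx - x) ^+ 2.
  by apply: le_trans rem_le _; rewrite ler_wpM2r ?sqr_ge0 // ler_pM2r.
have := f1hat_le_psi tau_gt0 remL_le.
have := psi_argmin_le (ltW tau_gt0) Tx_min.
rewrite psi_center; lra.
Qed.
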